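(* Let $Ab_0$ denote the class of all finite abelian groups, and define $f:Ab_0\to(0,\infty)$ by $f(G)=\frac{|\mathrm{Aut}(G)|}{|G|}$, where $\mathrm{Aut}(G)$ is the automorphism group of $G$. Then the set $\mathrm{Im}(f)\cap[0,1]$, where $\mathrm{Im}(f)=\{f(G)\mid G\in Ab_0\}$, is dense in $[0,1]$. *)

From HB Require Import structures.
From mathcomp Require Import all_boot all_order all_algebra all_fingroup.
From mathcomp Require Import reals.
Set Implicit Arguments. Unset Strict Implicit. Unset Printing Implicit Defensive.
Import Order.TTheory GRing.Theory Num.Theory.
Local Open Scope ring_scope.

(* f(G) = |Aut(G)| / |G|, as a real number in R. [Aut G] is MathComp's
   automorphism group of G (permutations of gT supported on G that restrict
   to group automorphisms of G); its cardinality is the number of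
   automorphisms of G. *)
Definition aut_ratio (R : realType) (gT : finGroupType) (G : {group gT}) : R :=
  (#|Aut G|%:R / #|G|%:R).

From HB Require Import structures.
From mathcomp Require Import all_boot all_order all_algebra all_fingroup.
From mathcomp Require Import reals.
From mathcomp Require Import cyclic zify ring lra.
Import Order.TTheory GRing.Theory Num.Theory.

(* For a cyclic group of order n, |Aut G|/|G| = phi(n)/n, the product of the
   factors 1 - 1/p over the primes p dividing n.  Fix a with 1/a < eps.  The
   partial products u_M of 1 - 1/p over the primes a <= p < M start at u_0 = 1,
   never drop by more than 1/a at a time, and eventually fall below eps:
   Euler's argument bounds the product over all primes p <= M by 1/H_M, the
   inverse of the M-th harmonic number (from phi(M!)/M! * H_M <= 1, itself a
   consequence of sum_(d | n) phi(d) = n), and H_(2^m) >= m/2.  So every x in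
   [0, 1] is eps-close to some u_M, which is phi(N)/N for N the product of the
   primes a <= p < M. *)

Set Implicit Arguments.
Unset Strict Implicit.
Unset Printing Implicit Defensive.

Lemma sum_coprime_mul a b : 0 < a ->
  \sum_(0 <= i < a * b) coprime a i = b * totient a.
Proof.
move=> a_gt0; rewrite totient_count_coprime.
elim: b => [|b IHb]; first by rewrite muln0 big_geq.
rewrite mulnS addnC (@big_cat_nat _ _ _ (a * b)) ?leq_addr //= IHb mulSn addnC.
congr (_ + _); rewrite -{1}[a * b]add0n big_addn addKn.
by apply: eq_bigr => i _; rewrite -coprime_modr addnC mulnC modnMDl coprime_modr.
Qed.

Lemma totient_mul_le d e : totient (d * e) <= e * totient d.
Proof.
have [->|d_gt0] := posnP d; first by rewrite mul0n.
rewrite totient_count_coprime -(@sum_coprime_mul d e d_gt0).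
apply: leq_sum => i _; rewrite coprimeMl.
by case: (coprime d i); case: (coprime e i).
Qed.

Lemma sum_totient_quotients n M : 0 < n ->
    (forall k, 0 < k <= M -> k %| n) ->
  \sum_(1 <= k < M.+1) totient (n %/ k) <= n.
Proof.
move=> n_gt0 dvd_n.
have quot_inj : {in index_iota 1 M.+1 &, injective (divn n)}.
  move=> k1 k2; rewrite !mem_index_iota => /dvd_n k1n /dvd_n k2n eq_q.
  by rewrite -(mulKn k1 n_gt0) -divnA // eq_q divnA // mulKn.
rewrite -[X in _ <= X]sum_totient_dvd -(big_map (divn n) xpredT totient).
rewrite -(big_mkord (fun d => d %| n) totient).
apply: (uniq_sub_le_big_cond leqnn (fun m k => leq_addr k m)).
- by rewrite filter_predT map_inj_in_uniq ?iota_uniq.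
- by rewrite filter_uniq ?iota_uniq.
move=> d; rewrite filter_predT => /mapP[k k_in ->].
rewrite mem_filter mem_index_iota.
move: k_in; rewrite mem_index_iota => /dvd_n k_dvd.
by rewrite ltnS leq_div dvdn_div.
Qed.

Lemma prime_dvd_fact p M : prime p -> (p %| M`!) = (p <= M).
Proof.
move=> p_pr; rewrite fact_prod Euclid_dvd_prod // big_has.
apply/hasP/idP => [[i] | p_le_M].
  by rewrite mem_index_iota => /andP[i_gt0 i_le_M] /(dvdn_leq i_gt0)/leq_trans->.
by exists p; rewrite ?mem_index_iota ?prime_gt0.
Qed.

Definition prime_prod a b := \prod_(a <= p < b | prime p) p.

Lemma prime_prod_gt0 a b : 0 < prime_prod a b.
Proof. by apply: prodn_cond_gt0 => p /prime_gt0. Qed.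

Lemma prime_dvd_prime_prod p a b :
  prime p -> (p %| prime_prod a b) = (a <= p < b).
Proof.
move=> p_pr; rewrite Euclid_dvd_prod // big_has_cond.
apply/hasP/idP => [[q] | p_in].
  by rewrite mem_index_iota => q_in /andP[q_pr]; rewrite dvdn_prime2 // => /eqP->.
by exists p; rewrite ?mem_index_iota //= p_pr dvdnn.
Qed.

Local Open Scope ring_scope.

Section TotientRatio.
Variable R : realFieldType.

Definition totient_ratio n : R := (totient n)%:R / n%:R.
Definition harmonic M : R := \sum_(1 <= k < M.+1) k%:R^-1.
Definition euler_prod a b : R := \prod_(a <= p < b | prime p) (1 - p%:R^-1).

Lemma totient_ratio_dvd_le d n : (0 < n)%N -> (d %| n)%N ->
  totient_ratio n <= totient_ratio d.
Proof.
move=> n_gt0 d_dvd_n; have d_gt0 : (0 < d)%N by apply: dvdn_gt0 d_dvd_n.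
rewrite /totient_ratio ler_pdivrMr ?ltr0n // mulrAC ler_pdivlMr ?ltr0n //.
rewrite -!natrM ler_nat -(divnK d_dvd_n); set e := (n %/ d)%N.
have := totient_mul_le d e; rewrite [(e * d)%N]mulnC; nia.
Qed.

Lemma totient_ratio_harmonic_le1 n M : (0 < n)%N ->
    (forall k, (0 < k <= M)%N -> (k %| n)%N) ->
  totient_ratio n * harmonic M <= 1.
Proof.
move=> n_gt0 dvd_n; have n_gt0R : 0 < n%:R :> R by rewrite ltr0n.
apply: le_trans (_ : \sum_(1 <= k < M.+1) (totient (n %/ k))%:R / n%:R <= _).
  rewrite /harmonic mulr_sumr; apply: ler_sum_nat => k /dvd_n k_dvd_n.
  have k_gt0 : (0 < k)%N by apply: dvdn_gt0 k_dvd_n.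
  have -> : (totient (n %/ k))%:R / n%:R = totient_ratio (n %/ k) / k%:R.
    by rewrite /totient_ratio -{2}(divnK k_dvd_n) natrM invfM mulrA.
  by rewrite ler_wpM2r ?invr_ge0 ?ler0n ?totient_ratio_dvd_le ?dvdn_div.
rewrite -mulr_suml ler_pdivrMr // mul1r -natr_sum ler_nat.
exact: sum_totient_quotients.
Qed.

Lemma totient_ratio_primes n : (0 < n)%N ->
  totient_ratio n = \prod_(p <- primes n) (1 - p%:R^-1).
Proof.
move=> n_gt0; rewrite /totient_ratio totientE // {3}(prod_prime_decomp n_gt0).
rewrite prime_decompE big_map !natr_prod -prodf_div big_seq [RHS]big_seq.
apply: eq_bigr => p p_n /=.
have p_gt0 : (0 < p)%N by move: p_n; rewrite mem_primes => /andP[/prime_gt0].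
have -> : (p ^ logn p n = p * p ^ (logn p n).-1)%N.
  by rewrite -expnS prednK ?logn_gt0.
rewrite -[p.-1]subn1 !natrM natrB //; field.
by rewrite !pnatr_eq0 -!lt0n expn_gt0 p_gt0.
Qed.

Lemma totient_ratio_euler_prod n a b : (0 < n)%N ->
    (forall p, prime p -> (p %| n)%N = (a <= p < b)%N) ->
  totient_ratio n = euler_prod a b.
Proof.
move=> n_gt0 prime_dvd_n; set m := (maxn n b).+1.
rewrite totient_ratio_primes // -(@filter_pi_of n m) ?ltnS ?leq_maxl //.
rewrite big_filter.
rewrite /euler_prod (@big_nat_widenl _ _ _ a 0) // (@big_nat_widen _ _ _ 0 b m).
  apply: eq_bigl => p; rewrite /= mem_primes n_gt0; case p_pr: (prime p) => //=.
  by rewrite prime_dvd_n // andbC.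
by rewrite leqW ?leq_maxr.
Qed.

Lemma harmonic_pow2 m : m%:R / 2 <= harmonic (2 ^ m).
Proof.
elim: m => [|m IHm]; first by rewrite mul0r sumr_ge0 // => k _; rewrite invr_ge0.
rewrite /harmonic (@big_cat_nat _ _ _ (2 ^ m).+1) //= ?ltnS ?leq_pexp2l //.
rewrite -/(harmonic _) -natr1 mulrDl lerD // mul1r.
have -> : 2^-1 = \sum_((2 ^ m).+1 <= k < (2 ^ m.+1).+1) ((2 ^ m.+1)%:R^-1 : R).
  rewrite sumr_const_nat subSS expnS mul2n -addnn addnK -mulr_natr natrD.
  by field; rewrite -natrD pnatr_eq0 -lt0n addn_gt0 expn_gt0.
apply: ler_sum_nat => k /andP[k_gt k_le].
by rewrite lef_pV2 ?posrE ?ltr0n ?expn_gt0 ?ler_nat // (leq_trans _ k_gt).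
Qed.

Lemma euler_prod_gt0 a b : 0 < euler_prod a b.
Proof.
apply: prodr_gt0 => p /prime_gt1; rewrite -(ltr_nat R) subr_gt0 => p_gt1.
by rewrite invf_lt1 // (lt_trans ltr01).
Qed.

Lemma euler_prod_le1 a b : euler_prod a b <= 1.
Proof.
apply: prodr_ile1 => p /prime_gt1; rewrite -(ltr_nat R) => p_gt1.
by rewrite gerBl invr_ge0 ler0n subr_ge0 invf_le1 ?ltW // (lt_trans ltr01).
Qed.

Lemma euler_prod_cat a b c : (a <= b <= c)%N ->
  euler_prod a c = euler_prod a b * euler_prod b c.
Proof. by case/andP=> ab bc; rewrite /euler_prod (big_cat_nat ab bc). Qed.

Lemma euler_prod_step_le a b : (0 < a)%N ->
  euler_prod a b - euler_prod a b.+1 <= a%:R^-1.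
Proof.
move=> a_gt0; have [a_le_b | b_lt_a] := leqP a b; last first.
  by rewrite /euler_prod !big_geq ?(ltnW b_lt_a) // subrr invr_ge0.
rewrite /euler_prod [in X in _ - X]big_mkcond big_nat_recr //= -big_mkcond.
rewrite -/(euler_prod a b).
have prod_le1 := euler_prod_le1 a b; have prod_ge0 := ltW (euler_prod_gt0 a b).
case: ifP => _; last by rewrite mulr1 subrr invr_ge0.
rewrite mulrBr mulr1 opprB addrC subrK.
apply: le_trans (ler_piMl _ prod_le1) _; first by rewrite invr_ge0.
by rewrite lef_pV2 ?posrE ?ltr0n ?ler_nat // (leq_trans a_gt0).
Qed.

Lemma euler_prod_harmonic_le1 M : euler_prod 0 M.+1 * harmonic M <= 1.
Proof.
have fact_ratio : totient_ratio M`! = euler_prod 0 M.+1.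
  apply: totient_ratio_euler_prod (fact_gt0 M) _ => p p_pr.
  by rewrite prime_dvd_fact.
by rewrite -fact_ratio totient_ratio_harmonic_le1 ?fact_gt0 // => k /dvdn_fact.
Qed.
End TotientRatio.

Lemma exists_euler_prod_lt (R : archiRealFieldType) a (eps : R) : 0 < eps ->
  exists b, euler_prod R a b < eps.
Proof.
move=> eps_gt0; set c := euler_prod R 0 a.
have c_gt0 : 0 < c := euler_prod_gt0 R 0 a.
have ec_gt0 : 0 < eps * c by rewrite mulr_gt0.
have [m [m_big a_le_m]] : exists m, (eps * c)^-1 < m%:R / 2 /\ (a <= m)%N.
  exists (Num.bound ((eps * c)^-1 * 2) + a)%N; split; last exact: leq_addl.
  rewrite ltr_pdivlMr //; apply: lt_le_trans (archi_boundP _) _.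
    by rewrite mulr_ge0 // ltW // invr_gt0.
  by rewrite ler_nat leq_addr.
have a_le_M : (a <= (2 ^ m).+1)%N.
  by rewrite (leq_trans a_le_m) // leqW // ltnW // ltn_expl.
exists (2 ^ m).+1.
have := euler_prod_harmonic_le1 R (2 ^ m).
rewrite (@euler_prod_cat _ 0 a) ?a_le_M // -/c.
have := harmonic_pow2 R m; set H := harmonic R (2 ^ m); set P := euler_prod _ _ _.
move=> H_big prod_le1.
have : 1 < eps * c * H.
  by rewrite -ltr_pdivrMl // mulr1 (lt_le_trans m_big).
have := euler_prod_gt0 R a (2 ^ m).+1; rewrite -/P => P_gt0; nra.
Qed.

Lemma exists_inv_nat_lt (R : archiRealFieldType) (eps : R) : 0 < eps ->
  exists2 a, (0 < a)%N & a%:R^-1 < eps.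
Proof.
move=> eps_gt0; have inv_ge0 : 0 <= eps^-1 by rewrite invr_ge0 ltW.
exists (Num.bound eps^-1).+1; first by [].
rewrite -[X in _ < X]invrK ltf_pV2 ?posrE ?ltr0n ?invr_gt0 //.
by apply: lt_trans (archi_boundP inv_ge0) _; rewrite ltr_nat.
Qed.

Lemma approx_by_small_steps (R : realDomainType) (u : nat -> R) (x eps : R) :
    (forall n, 0 <= u n) -> (forall n, u n - u n.+1 < eps) ->
    (exists N, u N < eps) -> 0 <= x <= u 0%N ->
  exists n, `|x - u n| < eps.
Proof.
move=> u_ge0 u_step [N uN_lt] /andP[x_ge0 x_le_u0].
have [x_lt_eps | eps_le_x] := ltP x eps.
  by exists N; have := u_ge0 N; rewrite ltr_distlC => ?; apply/andP; split; lra.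
have ex_below : exists n, u n <= x.
  by exists N; rewrite ltW // (lt_le_trans uN_lt).
case: (ex_minnP ex_below) => -[|n] un_le_x n_min.
  have -> : x = u 0%N by apply/le_anti; rewrite x_le_u0 un_le_x.
  by exists 0%N; rewrite subrr normr0 (le_lt_trans (u_ge0 N)).
have x_lt_un : x < u n by rewrite ltNge; apply/negP => /n_min; rewrite ltnn.
by exists n.+1; have := u_step n; rewrite ltr_distlC => ?; apply/andP; split; lra.
Qed.

Lemma aut_ratio_cyclic (R : realType) (gT : finGroupType) (G : {group gT}) :
  cyclic G -> aut_ratio R G = totient_ratio R #|G|.
Proof. by move=> G_cyclic; rewrite /aut_ratio card_Aut_cyclic. Qed.

Theorem lemma2p1 (R : realType) (x eps : R) :
  0 <= x <= 1 -> 0 < eps ->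
  exists (gT : finGroupType) (G : {group gT}),
    [/\ abelian G, aut_ratio R G <= 1 & `|x - aut_ratio R G| < eps].
Proof.
move=> x01 eps_gt0; have [a a_gt0 inv_a_lt] := exists_inv_nat_lt eps_gt0.
have [M x_near] : exists M, `|x - euler_prod R a M| < eps.
  apply: approx_by_small_steps => [M | M | | ].
  - exact/ltW/euler_prod_gt0.
  - exact: le_lt_trans (euler_prod_step_le R M a_gt0) inv_a_lt.
  - exact: exists_euler_prod_lt.
  - by rewrite /euler_prod big_geq.
pose N := prime_prod a M.
have N_ratio : totient_ratio R N = euler_prod R a M.
  apply: totient_ratio_euler_prod (prime_prod_gt0 a M) _ => p.
  exact: prime_dvd_prime_prod.
have card_G : #|<[Zp1 : 'I_N.-1.+1]>%g| = N.
  by rewrite -orderE order_Zp1 prednK ?prime_prod_gt0.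
exists _, <[Zp1 : 'I_N.-1.+1]>%G.
rewrite aut_ratio_cyclic ?cycle_cyclic // card_G N_ratio.
by rewrite cycle_abelian euler_prod_le1.
Qed.
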